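(* Let $n\geq 2$ be an integer and let $\sigma\colon E(K_{4n})\to\{-1,1\}$ be such that the graph $\left(V(K_{4n}),\sigma^{-1}(1)\right)$ is the disjoint union of a complete graph of order $3n+2$ and $n-2$ isolated vertices. Then $\left|\sigma\left(E(K_{4n})\right)\right|=n^2+11n+2$, and $|\sigma(M)|\geq 4$ for every perfect matching $M$ in $K_{4n}$.
   Context: $K_{4n}$ denotes the complete graph on $4n$ vertices, with vertex set $V(K_{4n})$ and edge set $E(K_{4n})$. For a set $F$ of edges, $\sigma(F)=\sum_{e\in F}\sigma(e)$; $\sigma^{-1}(1)$ is the set of edges with value $1$. *)

From mathcomp Require Import all_boot all_order all_algebra.
Set Implicit Arguments. Unset Strict Implicit. Unset Printing Implicit Defensive.
Import Order.TTheory GRing.Theory Num.Theory.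

Definition Kedges (m : nat) : {set {set 'I_m}} := [set e : {set 'I_m} | #|e| == 2%N].

(* A signature sigma : E(K_m) -> {-1,1}, represented as a function on vertex
   sets whose values on edges lie in {-1,1} (values elsewhere irrelevant). *)
Definition is_signature (m : nat) (sigma : {set 'I_m} -> int) : Prop :=
  forall e, e \in Kedges m -> sigma e = 1%R \/ sigma e = (-1)%R.

Definition sigma_sum (m : nat) (sigma : {set 'I_m} -> int)
    (F : {set {set 'I_m}}) : int := (\sum_(e in F) sigma e)%R.

Definition perfect_matching (m : nat) (M : {set {set 'I_m}}) : Prop :=
  M \subset Kedges m /\ forall v : 'I_m, #|[set e in M | v \in e]| = 1%N.

From mathcomp Require Import all_boot all_order all_algebra.
From mathcomp Require Import zify.
Import Order.TTheory GRing.Theory Num.Theory.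

Set Implicit Arguments.
Unset Strict Implicit.
Unset Printing Implicit Defensive.

(* By hypothesis sigma is +1 exactly on the edges lying inside a
   vertex set S with #|S| = 3n+2, and -1 on all other edges.  Hence for every
   set F of edges, sigma(F) = 2 p_F - #|F|, where p_F = #|F :&: powerset S|
   counts the edges of F inside S.
   - For F = E(K_4n) we have p_F = C(3n+2,2) and #|F| = C(4n,2), and
     2 C(3n+2,2) - C(4n,2) = n^2 + 11n + 2 is plain arithmetic.
   - For a perfect matching M, double counting vertex-edge incidences gives
     sum_(e in M) #|A :&: e| = #|A| for every vertex set A.  With A = V this
     gives #|M| = 2n; with A = S, as an edge not inside S meets S in at most
     one vertex, it gives 3n+2 <= #|M| + p_M, i.e. p_M >= n+2, whence
     sigma(M) = 2 p_M - 2n >= 4.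
   The file first proves the counting facts about matchings of an arbitrary
   finite vertex type, then the binomial identity, then the value of sigma on
   a set of edges, and finally the theorem. *)

Lemma card_as_indicator_sum (T : finType) (X : {set T}) (P : pred T) :
  #|[set v in X | P v]| = \sum_(v in X) P v.
Proof.
rewrite -sum1_card [LHS]big_mkcond [RHS]big_mkcond /=; apply: eq_bigr => v _.
by rewrite inE; case: (v \in X); case: (P v).
Qed.

Lemma edge_trace_le (T : finType) (S e : {set T}) :
  #|e| = 2 -> #|S :&: e| <= 1 + (e \in powerset S).
Proof.
move=> e2; rewrite powersetE; have [eS | eNS] := boolP (e \subset S).
  by rewrite (setIidPr eS) e2.
rewrite addn0 -ltnS -e2 proper_card // properE subsetIr.
by rewrite subsetI subxx andbT.
Qed.

Section PerfectMatching.

Variables (T : finType) (M : {set {set T}}).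
Hypothesis edgeM : forall e, e \in M -> #|e| = 2.
Hypothesis covered : forall v : T, #|[set e in M | v \in e]| = 1.

(* Double counting: the edges of M partition every vertex set A. *)
Lemma matching_trace_sum (A : {set T}) : \sum_(e in M) #|A :&: e| = #|A|.
Proof.
transitivity (\sum_(e in M) \sum_(v in A) (v \in e)).
  apply: eq_bigr => e _; rewrite -(card_as_indicator_sum A (mem e)).
  by apply: eq_card => v; rewrite !inE.
rewrite exchange_big -sum1_card; apply: eq_bigr => v _.
by rewrite -(covered v) (card_as_indicator_sum M (fun e => v \in e)).
Qed.

Lemma card_matching : (#|M|).*2 = #|T|.
Proof.
rewrite -mul2n mulnC -sum_nat_const -cardsT -(matching_trace_sum [set: T]).
by apply: eq_bigr => e eM; rewrite setTI edgeM.
Qed.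

(* Covering a vertex set S needs, besides one vertex per edge, one more vertex
   for each edge lying inside S. *)
Lemma matching_clique_bound (S : {set T}) :
  #|S| <= #|M| + #|M :&: powerset S|.
Proof.
have -> : #|M :&: powerset S| = \sum_(e in M) (e \in powerset S).
  by rewrite -card_as_indicator_sum; apply: eq_card => e; rewrite !inE.
rewrite -(matching_trace_sum S) -sum1_card -big_split /=.
by apply: leq_sum => e eM; apply: edge_trace_le; apply: edgeM.
Qed.

End PerfectMatching.

Lemma double_bin2 (m : nat) : 'C(m, 2).*2 = m * m.-1.
Proof.
rewrite bin2 -[RHS]odd_double_half oddM.
by case: m => //= m; rewrite andNb.
Qed.

Lemma clique_count_identity (n : nat) :
  'C(3 * n + 2, 2).*2 = 'C(4 * n, 2) + (n ^ 2 + 11 * n + 2).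
Proof. by have := double_bin2 (3 * n + 2); have := double_bin2 (4 * n); nia. Qed.

Lemma card_Kedges (m : nat) : #|Kedges m| = 'C(m, 2).
Proof. by rewrite -[in RHS](card_ord m) -card_draws. Qed.

Lemma card_Kedges_inside (m : nat) (S : {set 'I_m}) :
  #|Kedges m :&: powerset S| = 'C(#|S|, 2).
Proof. by rewrite -cards_draws; apply: eq_card => e; rewrite !inE andbC. Qed.

Lemma clique_signature (m : nat) (sigma : {set 'I_m} -> int) (S : {set 'I_m}) :
  is_signature sigma ->
  (forall e, e \in Kedges m -> (sigma e == 1%R) = (e \subset S)) ->
  forall e, e \in Kedges m -> sigma e = (if e \subset S then 1 else -1)%R.
Proof.
move=> sign pos e eK; have := pos e eK.
by case: (e \subset S) => /eqP //; case: (sign e eK).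
Qed.

Lemma sigma_sum_clique (m : nat) (sigma : {set 'I_m} -> int) (S : {set 'I_m})
    (F : {set {set 'I_m}}) :
  (forall e, e \in Kedges m -> sigma e = (if e \subset S then 1 else -1)%R) ->
  F \subset Kedges m ->
  sigma_sum sigma F = ((#|F :&: powerset S|).*2%:Z - #|F|%:Z)%R.
Proof.
move=> clique FK.
have sigmaF e : e \in F -> sigma e = (if e \in powerset S then 1 else -1)%R.
  by move=> eF; rewrite powersetE clique // (subsetP FK).
rewrite /sigma_sum (big_setID (powerset S)) /=.
have -> : (\sum_(e in F :&: powerset S) sigma e = #|F :&: powerset S|%:Z)%R.
  rewrite -sum1_card -natz natr_sum; apply: eq_bigr => e /setIP[eF eS].
  by rewrite sigmaF // eS.
have -> : (\sum_(e in F :\: powerset S) sigma e = - #|F :\: powerset S|%:Z)%R.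
  rewrite -sum1_card -natz natr_sum -sumrN; apply: eq_bigr => e /setDP[eF eNS].
  by rewrite sigmaF // (negPf eNS).
by rewrite -(cardsID (powerset S) F) -addnn !PoszD opprD addrA addrK.
Qed.

Theorem mainTheorem5 (n : nat) (sigma : {set 'I_(4 * n)} -> int) :
  (2 <= n)%N ->
  is_signature sigma ->
  (* the positive graph (V, sigma^{-1}(1)) is a complete graph on a vertex set
     S of order 3n+2 together with the remaining n-2 vertices isolated *)
  (exists S : {set 'I_(4 * n)}, #|S| = (3 * n + 2)%N /\
     forall e, e \in Kedges (4 * n) -> (sigma e == 1%R) = (e \subset S)) ->
  `|sigma_sum sigma (Kedges (4 * n))|%R = Posz (n ^ 2 + 11 * n + 2)%N /\
  (forall M : {set {set 'I_(4 * n)}}, perfect_matching M ->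
     (Posz 4 <= `|sigma_sum sigma M|)%R).
Proof.
move=> _ sign [S [cardS pos]]; have clique := clique_signature sign pos.
split.
  rewrite (sigma_sum_clique clique (subxx _)) card_Kedges_inside card_Kedges.
  by rewrite cardS clique_count_identity PoszD addrAC subrr add0r.
move=> M [MK covered].
have edgeM e : e \in M -> #|e| = 2 by move/(subsetP MK); rewrite inE => /eqP.
have := card_matching edgeM covered; rewrite card_ord => cardM.
have := matching_clique_bound edgeM covered S; rewrite cardS => bound.
rewrite (sigma_sum_clique clique MK).
lia.
Qed.
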